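(* Let $n\ge1$, let $M_1,\dots,M_n\ge0$ be integers, let $\sigma,\tau$ be permutations of $\{1,\dots,n\}$, and let $a,b,c,d,q$ be generic. For integers $0\le k_i\le M_i$ and $0\le l\le M_1+\dots+M_n$, $$R^l_{k_1+\dots+k_n}(a,b,c,d;M_1+\dots+M_n;q)=\sum_{\substack{m_1+\dots+m_n=l\\0\le m_i\le M_i}}\prod_{i=1}^n R_{k_i}^{m_i}\big(aq^{|k|_i^\sigma},\,bq^{|M-k|_i^\tau},\,cq^{|m|_i^{\mathrm{id}}},\,dq^{|M-m|_i^{\mathrm{id}}};M_i;q\big).$$
   Context: For a multi-index $v=(v_1,\dots,v_n)$ and a permutation $\sigma$, $|v|_i^\sigma=\sum_{\{j:\,\sigma(j)<\sigma(i)\}}v_j$ (so $|v|_i^{\mathrm{id}}=v_1+\dots+v_{i-1}$); $M-k$ denotes $(M_1-k_1,\dots,M_n-k_n)$. $h_k(x;a)=\prod_{j=0}^{k-1}(1-axq^j+a^2q^{2j})$, and for generic parameters $R_k^l(a,b,c,d;N;q)$ are the unique coefficients with $h_k(x;a)h_{N-k}(x;b)=\sum_{l=0}^N R_k^l(a,b,c,d;N;q)h_l(x;c)h_{N-l}(x;d)$. *)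

From HB Require Import structures.
From mathcomp Require Import all_boot all_order all_algebra all_fingroup.
From Stdlib Require Import ClassicalEpsilon.
Set Implicit Arguments. Unset Strict Implicit. Unset Printing Implicit Defensive.
Import GRing.Theory.
Local Open Scope ring_scope.

Definition hpoly (K : fieldType) (q a : K) (k : nat) : {poly K} :=
  \prod_(j < k) ((1 + a ^+ 2 * q ^+ (2 * j))%:P - (a * q ^+ j) *: 'X).

Definition hbasis (K : fieldType) (q c d : K) (N l : nat) : {poly K} :=
  hpoly q c l * hpoly q d (N - l).

(* genericity of (c,d,N): the family (h_l(x;c) h_{N-l}(x;d))_{0<=l<=N} is
   linearly independent (hence a basis of polynomials of degree <= N),
   so that the coefficients R_k^l are uniquely determined. *)
Definition basis_generic (K : fieldType) (q c d : K) (N : nat) : Prop :=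
  forall r : nat -> K,
    \sum_(l < N.+1) r l *: hbasis q c d N l = 0 -> forall l, (l <= N)%N -> r l = 0.

(* the coefficient vector l |-> R_k^l(a,b,c,d;N;q): some r with
   h_k(x;a) h_{N-k}(x;b) = sum_{l=0}^N r_l h_l(x;c) h_{N-l}(x;d)
   (unique for l <= N under basis_generic). *)
Definition Rvec (K : fieldType) (a b c d : K) (N : nat) (q : K) (k : nat) : nat -> K :=
  epsilon (inhabits (fun _ => 0))
    (fun r : nat -> K =>
       hpoly q a k * hpoly q b (N - k) = \sum_(l < N.+1) r l *: hbasis q c d N l).

Definition R (K : fieldType) (k l : nat) (a b c d : K) (N : nat) (q : K) : K :=
  Rvec a b c d N q k l.

Definition psum (n : nat) (s : 'S_n) (v : 'I_n -> nat) (i : 'I_n) : nat :=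
  (\sum_(j < n | (s j < s i)%N) v j)%N.

From HB Require Import structures.
From mathcomp Require Import all_boot all_order all_algebra all_fingroup.
From mathcomp Require Import zify.
From Stdlib Require Import ClassicalEpsilon.
Import GRing.Theory.
Local Open Scope ring_scope.

(* Both sides are coefficients of expansions in the basis h_l(x;c) h_(N-l)(x;d).
   Since h_(u+v)(x;a) = h_u(x;a) h_v(x;aq^u), the product h_K(a) h_(N-K)(b) with
   K = sum k_i splits, along the orders sigma and tau, into the n factors
   h_(k_i)(aq^(|k|_i^sigma)) h_(M_i-k_i)(bq^(|M-k|_i^tau)).  Expand the factors
   one after the other, the i-th in the basis with parameters cq^(|m|_i) and
   dq^(|M-m|_i) determined by the choices m_j, j < i, already made: by the same
   splitting rule the chosen basis elements multiply back to
   h_(|m|)(c) h_(N-|m|)(d).  Uniqueness of the coefficients gives the identity. *)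

Lemma psum1E n (v : 'I_n -> nat) i : psum 1 v i = (\sum_(j < n | (j < i)%N) v j)%N.
Proof. by apply: eq_bigl => j; rewrite !perm1. Qed.

Lemma psum1_widen n (v : 'I_n.+1 -> nat) (i : 'I_n) :
  psum 1 v (widen_ord (leqnSn n) i) = psum 1 (fun j => v (widen_ord (leqnSn n) j)) i.
Proof.
by rewrite !psum1E big_mkcond big_ord_recr /= ltnNge ltnW // addn0 [RHS]big_mkcond.
Qed.

Lemma psum1_max n (v : 'I_n.+1 -> nat) :
  psum 1 v ord_max = (\sum_(i < n) v (widen_ord (leqnSn n) i))%N.
Proof.
rewrite psum1E big_mkcond big_ord_recr /= ltnn addn0.
by apply: eq_bigr => i _; rewrite ltn_ord.
Qed.

Lemma psum_perm n (s : 'S_n) (v : 'I_n -> nat) i :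
  psum s v ((s^-1)%g i) = psum 1 (fun j => v ((s^-1)%g j)) i.
Proof.
rewrite /psum (reindex_inj (@perm_inj _ s^-1)).
by apply: eq_bigl => j; rewrite !permKV !perm1.
Qed.

Section HPoly.
Context {K : fieldType} {q : K}.

Lemma hpoly0 a : hpoly q a 0 = 1.
Proof. by rewrite /hpoly big_ord0. Qed.

Lemma hpolyD a x y : hpoly q a (x + y) = hpoly q a x * hpoly q (a * q ^+ x) y.
Proof.
rewrite /hpoly big_split_ord /=; congr (_ * _); apply: eq_bigr => j _ /=.
by rewrite exprMn -exprM -!mulrA -!exprD mulnDr (mulnC x 2%N).
Qed.

Lemma hpoly_sum a n (v : 'I_n -> nat) :
  hpoly q a (\sum_(i < n) v i)%N = \prod_(i < n) hpoly q (a * q ^+ psum 1 v i) (v i).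
Proof.
elim: n v => [|n IH] v; first by rewrite !big_ord0 hpoly0.
rewrite !big_ord_recr /= hpolyD IH psum1_max; congr (_ * _).
by apply: eq_bigr => i _; rewrite psum1_widen.
Qed.

Lemma hpoly_sum_perm a n (s : 'S_n) (v : 'I_n -> nat) :
  hpoly q a (\sum_(i < n) v i)%N = \prod_(i < n) hpoly q (a * q ^+ psum s v i) (v i).
Proof.
rewrite (reindex_inj (@perm_inj _ s^-1)) [RHS](reindex_inj (@perm_inj _ s^-1)) /=.
by rewrite hpoly_sum; apply: eq_bigr => i _; rewrite psum_perm.
Qed.

Lemma size_hpoly a k : (size (hpoly q a k) <= k.+1)%N.
Proof.
elim: k => [|k IH]; first by rewrite hpoly0 size_poly1.
rewrite -addn1 hpolyD; apply: (leq_trans (size_polyMleq _ _)).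
have lin : (size (hpoly q (a * q ^+ k) 1) <= 2)%N.
  rewrite /hpoly big_ord1; apply: (leq_trans (size_polyD _ _)).
  rewrite geq_max size_polyN (leq_trans (size_polyC_leq1 _)) //=.
  by rewrite (leq_trans (size_scale_leq _ _)) // size_polyX.
by move: IH lin; lia.
Qed.

Lemma size_hpolyM a b x y : (size (hpoly q a x * hpoly q b y)%R <= (x + y).+1)%N.
Proof.
apply: (leq_trans (size_polyMleq _ _)).
by move: (size_hpoly a x) (size_hpoly b y); lia.
Qed.

Lemma size_hbasis c d N l : (l <= N)%N -> (size (hbasis q c d N l) <= N.+1)%N.
Proof. by move=> leN; rewrite (leq_trans (size_hpolyM _ _ _ _)) // subnKC. Qed.

Lemma hbasis_mul c d N l N' l' : (l <= N)%N -> (l' <= N')%N ->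
  hbasis q c d N l * hbasis q (c * q ^+ l) (d * q ^+ (N - l)) N' l' =
  hbasis q c d (N + N') (l + l').
Proof.
move=> leN leN'; rewrite /hbasis.
have -> : (N + N' - (l + l') = (N - l) + (N' - l'))%N by lia.
by rewrite !hpolyD mulrACA.
Qed.

End HPoly.

Section HBasis.
Variables (K : fieldType) (q c d : K) (N : nat).
Hypothesis gen : basis_generic q c d N.

Let hb : (N.+1).-tuple {poly_(N.+1) K} := [tuple npolyp N.+1 (hbasis q c d N i) | i < N.+1].

Let hbE (i : 'I_N.+1) : hb`_i = hbasis q c d N i :> {poly K}.
Proof. by rewrite -tnth_nth tnth_mktuple npolypK // size_hbasis // -ltnS. Qed.

Lemma hbasis_free : free hb.
Proof.
apply/freeP => k /(congr1 val); rewrite raddf_sum /= => sum0 i.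
have := gen (fun l => if (l < N.+1)%N then k (inord l) else 0) _ i (leq_ord i).
rewrite ltn_ord inord_val; apply; rewrite -[RHS]sum0.
by apply: eq_bigr => l _; rewrite ltn_ord inord_val -hbE.
Qed.

Lemma hbasis_full : basis_of fullv hb.
Proof. by rewrite basisEfree hbasis_free subvf size_tuple /= dim_polyn. Qed.

Lemma hbasis_span (p : {poly K}) : (size p <= N.+1)%N ->
  exists r : nat -> K, p = \sum_(l < N.+1) r l *: hbasis q c d N l.
Proof.
move=> sp; exists (fun l => coord hb (inord l) (npolyp N.+1 p)).
rewrite -[LHS](npolypK sp) [npolyp _ _ in LHS](coord_basis hbasis_full) ?memvf //.
by rewrite raddf_sum; apply: eq_bigr => l _; rewrite inord_val /= hbE.
Qed.

End HBasis.

Section FfunRcons.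
Context {T : finType} {n : nat}.

Notation widen := (widen_ord (leqnSn n)).

Definition ffun_rcons (g : {ffun 'I_n -> T}) (x : T) : {ffun 'I_n.+1 -> T} :=
  [ffun i => if unlift ord_max i is Some j then g j else x].

Lemma lift_max_widen (j : 'I_n) : lift ord_max j = widen j.
Proof. exact/val_inj/lift_max. Qed.

Lemma ffun_rcons_widen g x j : ffun_rcons g x (widen j) = g j.
Proof. by rewrite ffunE -lift_max_widen liftK. Qed.

Lemma ffun_rcons_max g x : ffun_rcons g x ord_max = x.
Proof. by rewrite ffunE unlift_none. Qed.

Lemma ffun_rcons_bij : bijective (fun gx => ffun_rcons gx.1 gx.2).
Proof.
exists (fun m : {ffun 'I_n.+1 -> T} => ([ffun j => m (widen j)], m ord_max)).
  case=> g x; rewrite ffun_rcons_max; congr (_, _).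
  by apply/ffunP => j; rewrite ffunE ffun_rcons_widen.
move=> m; apply/ffunP => i; rewrite ffunE.
by case: unliftP => [j ->|-> //]; rewrite lift_max_widen ffunE.
Qed.

Lemma forall_ffun_rcons (P : 'I_n.+1 -> pred T) g x :
  [forall i, P i (ffun_rcons g x i)] = [forall i, P (widen i) (g i)] && P ord_max x.
Proof.
apply/forallP/andP => [Pm | [/forallP Pg Px] i].
  split; last by have := Pm ord_max; rewrite ffun_rcons_max.
  by apply/forallP => j; have := Pm (widen j); rewrite ffun_rcons_widen.
case: (unliftP ord_max i) => [j ->|->]; last by rewrite ffun_rcons_max.
by rewrite lift_max_widen ffun_rcons_widen.
Qed.

Lemma big_ffun_rcons (V : Type) (idx : V) (op : Monoid.com_law idx)
    (P : 'I_n.+1 -> pred T) (F : {ffun 'I_n.+1 -> T} -> V) :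
  \big[op/idx]_(m : {ffun 'I_n.+1 -> T} | [forall i, P i (m i)]) F m =
  \big[op/idx]_(g : {ffun 'I_n -> T} | [forall i, P (widen i) (g i)])
     \big[op/idx]_(x | P ord_max x) F (ffun_rcons g x).
Proof.
rewrite (reindex _ (onW_bij _ ffun_rcons_bij)) /=.
rewrite (eq_bigl (fun gx : {ffun 'I_n -> T} * T =>
                   [forall i, P (widen i) (gx.1 i)] && P ord_max gx.2)).
  by rewrite -(pair_big_dep (fun g : {ffun 'I_n -> T} => [forall i, P (widen i) (g i)])
                            (fun _ x => P ord_max x) (fun g x => F (ffun_rcons g x))).
by move=> gx; rewrite forall_ffun_rcons.
Qed.

Lemma psum1_ffun_rcons (F : 'I_n.+1 -> T -> nat) g x i :
  psum 1 (fun j => F j (ffun_rcons g x j)) (widen i) = psum 1 (fun j => F (widen j) (g j)) i.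
Proof. by rewrite psum1_widen; apply: eq_bigr => j _; rewrite ffun_rcons_widen. Qed.

Lemma psum1_ffun_rcons_max (F : 'I_n.+1 -> T -> nat) g x :
  psum 1 (fun j => F j (ffun_rcons g x j)) ord_max = (\sum_(i < n) F (widen i) (g i))%N.
Proof. by rewrite psum1_max; apply: eq_bigr => j _; rewrite ffun_rcons_widen. Qed.

Lemma sum_ffun_rcons (F : 'I_n.+1 -> T -> nat) g x :
  (\sum_(i < n.+1) F i (ffun_rcons g x i) = \sum_(i < n) F (widen i) (g i) + F ord_max x)%N.
Proof.
rewrite big_ord_recr /= ffun_rcons_max; congr (_ + _)%N.
by apply: eq_bigr => i _; rewrite ffun_rcons_widen.
Qed.

End FfunRcons.

Section RCoefficients.
Context {K : fieldType} {q a b c d : K} {N k : nat}.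
Hypotheses (gen : basis_generic q c d N) (leN : (k <= N)%N).

Lemma R_expansion :
  hpoly q a k * hpoly q b (N - k) = \sum_(l < N.+1) R k l a b c d N q *: hbasis q c d N l.
Proof.
apply: (epsilon_spec (inhabits (fun _ => 0)) (fun r : nat -> K =>
  hpoly q a k * hpoly q b (N - k) = \sum_(l < N.+1) r l *: hbasis q c d N l)).
by apply: hbasis_span; rewrite // (leq_trans (size_hpolyM _ _ _ _)) // subnKC.
Qed.

Lemma R_unique (r : nat -> K) :
  hpoly q a k * hpoly q b (N - k) = \sum_(l < N.+1) r l *: hbasis q c d N l ->
  forall l, (l <= N)%N -> R k l a b c d N q = r l.
Proof.
rewrite R_expansion => /eqP; rewrite -subr_eq0 -sumrB => /eqP sum0 l leN'.
apply/eqP; rewrite -subr_eq0; apply/eqP.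
apply: (gen (fun l => R k l a b c d N q - r l)) leN'.
by rewrite -[RHS]sum0; apply: eq_bigr => i _; rewrite scalerBl.
Qed.

End RCoefficients.

Lemma prod_hbasis_expansion {K : fieldType} {q c d : K} {n B : nat} (M : 'I_n -> nat)
    (ltMB : forall i, (M i < B)%N) (f : 'I_n -> nat -> nat -> nat -> K)
    (P : 'I_n -> {poly K})
    (P_exp : forall i s t, P i =
       \sum_(x < (M i).+1) f i s t x *: hbasis q (c * q ^+ s) (d * q ^+ t) (M i) x) :
  \prod_(i < n) P i =
  \sum_(m : {ffun 'I_n -> 'I_B} | [forall i, (m i <= M i)%N])
     (\prod_(i < n)
        f i (psum 1 (fun j => val (m j)) i) (psum 1 (fun j => M j - m j)%N i) (m i))
       *: hbasis q c d (\sum_(i < n) M i) (\sum_(i < n) val (m i)).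
Proof.
elim: n M ltMB f P P_exp => [|n IH] M ltMB f P P_exp.
  rewrite big_ord0 (big_pred1 (ffun0 (card_ord 0))) => [|m].
    by rewrite big_ord0 scale1r /hbasis !big_ord0 !hpoly0 mulr1.
  by apply/forallP/eqP => [_|_ []//]; apply/ffunP => -[].
pose w := widen_ord (leqnSn n).
rewrite big_ord_recr /=.
rewrite (IH (fun i => M (w i)) _ (fun i => f (w i)) (fun i => P (w i))) => //.
rewrite (big_ffun_rcons _ _ _ (fun i (x : 'I_B) => (x <= M i)%N)) mulr_suml.
apply: eq_bigr => g /forallP le_gM.
set s := (\sum_(i < n) val (g i))%N; set N' := (\sum_(i < n) M (w i))%N.
have le_sN : (s <= N')%N by apply: leq_sum => i _; apply: le_gM.
rewrite (P_exp ord_max s (N' - s)%N) mulr_sumr (big_ord_narrow (ltMB ord_max)).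
apply: eq_bigr => x _; set x' := widen_ord _ x.
rewrite -scalerAl -scalerAr scalerA hbasis_mul //; last by rewrite -ltnS.
rewrite (sum_ffun_rcons (fun _ y => nat_of_ord y)) big_ord_recr /= ffun_rcons_max.
rewrite (psum1_ffun_rcons_max (fun _ y => nat_of_ord y)).
rewrite (psum1_ffun_rcons_max (fun j (y : 'I_B) => M j - y)%N).
rewrite -sumnB; last by move=> i _; apply: le_gM.
rewrite [(\sum_(i < n.+1) M i)%N]big_ord_recr; congr ((_ * _) *: _).
apply: eq_bigr => i _; rewrite ffun_rcons_widen (psum1_ffun_rcons (fun _ y => nat_of_ord y)).
by rewrite (psum1_ffun_rcons (fun j (y : 'I_B) => M j - y)%N).
Qed.

Lemma partition_big_le {V : nmodType} {I : finType} {C : pred I}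
    (deg : I -> nat) N {F : I -> V} :
    (forall m, C m -> (deg m <= N)%N) ->
  \sum_(m | C m) F m = \sum_(l < N.+1) \sum_(m | C m && (deg m == l)) F m.
Proof.
move=> degN; rewrite (partition_big (fun m => inord (deg m) : 'I_N.+1) xpredT) //=.
apply: eq_bigr => l _; apply: eq_bigl => m.
by case Cm: (C m); rewrite //= -(inj_eq val_inj) /= inordK // ltnS degN.
Qed.

Theorem mainTheorem9 (K : fieldType) (n : nat) (Hn : (1 <= n)%N)
  (M : 'I_n -> nat) (sigma tau : 'S_n) (a b c d q : K)
  (Hgen : forall (s t N : nat), basis_generic q (c * q ^+ s) (d * q ^+ t) N)
  (k : 'I_n -> nat) (Hk : forall i, (k i <= M i)%N)
  (l : nat) (Hl : (l <= \sum_(i < n) M i)%N) :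
  R (\sum_(i < n) k i)%N l a b c d (\sum_(i < n) M i)%N q =
  \sum_(m : {ffun 'I_n -> 'I_(\sum_(i < n) M i).+1}
          | [forall i, (m i <= M i)%N] && ((\sum_(i < n) (m i : nat))%N == l))
    \prod_(i < n)
      R (k i) (m i) (a * q ^+ psum sigma k i)
        (b * q ^+ psum tau (fun j => M j - k j)%N i)
        (c * q ^+ psum 1%g (fun j => (m j : nat)) i)
        (d * q ^+ psum 1%g (fun j => M j - m j)%N i) (M i) q.
Proof.
set N := (\sum_(i < n) M i)%N.
have le_kM : (\sum_(i < n) k i <= N)%N by apply: leq_sum => i _.
have ltMN i : (M i < N.+1)%N by rewrite ltnS /N (bigD1 i) //= leq_addr.
have gen := Hgen 0%N 0%N N; rewrite !expr0 !mulr1 in gen.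
move: l Hl; apply: (R_unique gen le_kM).
rewrite -sumnB // (hpoly_sum_perm _ _ sigma) (hpoly_sum_perm _ _ tau) -big_split /=.
rewrite (prod_hbasis_expansion (q := q) (c := c) (d := d) _ ltMN (fun i s t x =>
  R (k i) x (a * q ^+ psum sigma k i) (b * q ^+ psum tau (fun j => M j - k j)%N i)
    (c * q ^+ s) (d * q ^+ t) (M i) q)); last by move=> i s t; apply: R_expansion.
rewrite (partition_big_le (fun m : {ffun 'I_n -> 'I_N.+1} => \sum_i val (m i))%N N);
  last by move=> m /forallP le_mM; apply: leq_sum => i _; apply: le_mM.
by apply: eq_bigr => j _; rewrite scaler_suml; apply: eq_bigr => m /andP[_ /eqP <-].
Qed.
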